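(* Let $\Gamma=(N,A,u)$ be a finite normal form game. The following are equivalent: (i) there exists a game $\Gamma'$, in which all players have the same strategy set, that is fully symmetric in the label-dependent sense and satisfies $\Gamma\cong\Gamma'$; (ii) $\operatorname{Aut}(\Gamma)$ has a player $n$-transitive and strategy trivial subgroup $G$; (iii) there exists a matching $M$ of $A_1,\dots,A_n$ such that $M_{S_N}\le\operatorname{Aut}(\Gamma)$.
   Context: A game bijection $g=(\pi;(\tau_i)_{i\in N})$ from $(N,A,u)$ to $(M',B,v)$ consists of a bijection $\pi:N\to M'$ and bijections $\tau_i:A_i\to B_{\pi(i)}$; write $g(i)=\pi(i)$, $g(s_i)=\tau_i(s_i)$, $g(s)=(\tau_{\pi^{-1}(j)}(s_{\pi^{-1}(j)}))_{j}$; composition is $(\eta;(\phi_j))\circ(\pi;(\tau_i))=(\eta\circ\pi;(\phi_{\pi(i)}\circ\tau_i)_i)$. It is an isomorphism if $u_i(s)=v_{g(i)}(g(s))$ for all $i,s$; $\Gamma\cong\Gamma'$ means an isomorphism exists; $\operatorname{Aut}(\Gamma)$ is the group of isomorphisms from $\Gamma$ to itself. A subgroup $G$ is player $n$-transitive if the set of player permutations of its elements is all of $S_N$, and strategy trivial if for each $i\in N$, $g(s_i)=s_i$ for all $g\in G$ with $g(i)=i$ and all $s_i\in A_i$. Label-dependent fully symmetric: all players share a strategy set $X$ and $u_i(s)=u_{\pi(i)}(\pi(s))$ for all $i\in N$, $\pi\in S_N$, $s\in A$, where $\pi(s)=(s_{\pi^{-1}(i)})_{i\in N}$. A matching of $A_1,\dots,A_n$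 is $M\subseteq\times_iA_i$ such that for each $i$ and $a_i\in A_i$ exactly one $s\in M$ has $s_i=a_i$; $M_{ij}:A_i\to A_j$ sends $a_i$ to the unique $a_j$ with some $s\in M$ having $s_i=a_i$, $s_j=a_j$; $M_\pi=(\pi;(M_{i\pi(i)})_{i\in N})$, $M_{S_N}=\{M_\pi:\pi\in S_N\}$. *)

(* payoffs are Stdlib reals (only compared by equality). *)
From HB Require Import structures.
From mathcomp Require Import all_boot all_fingroup.
From Stdlib Require Rdefinitions.
Set Implicit Arguments. Unset Strict Implicit. Unset Printing Implicit Defensive.

Record game := Game {
  player : finType;
  strat : player -> finType;
  payoff : player -> (forall i : player, strat i) -> Rdefinitions.R }.

Arguments strat : clear implicits.
Arguments payoff : clear implicits.

Definition profile (G : game) := forall i : player G, strat G i.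

Record gbij (G H : game) := GBij {
  gpl : player G -> player H;
  gst : forall i : player G, strat G i -> strat H (gpl i) }.

Arguments gpl {G H} g _.
Arguments gst {G H} g i _.

Definition is_gbij (G H : game) (g : gbij G H) :=
  bijective (gpl g) /\ forall i, bijective (gst g i).

Definition gprof (G H : game) (g : gbij G H) (s : profile G) (t : profile H) :=
  forall k, t (gpl g k) = gst g k (s k).

Definition is_iso (G H : game) (g : gbij G H) :=
  is_gbij g /\
  forall i (s : profile G) (t : profile H),
    gprof g s t -> payoff G i s = payoff H (gpl g i) t.

Definition isomorphic (G H : game) := exists g : gbij G H, is_iso g.

Definition gid (G : game) : gbij G G :=
  @GBij G G (fun i => i) (fun i a => a).

Definition gcomp (G H K : game) (f : gbij H K) (g : gbij G H) : gbij G K :=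
  @GBij G K (fun i => gpl f (gpl g i)) (fun i a => gst f (gpl g i) (gst g i a)).

Definition aut_subgroup (G : game) (S : gbij G G -> Prop) :=
  (forall g, S g -> is_iso g) /\
  S (gid G) /\
  (forall f g, S f -> S g -> S (gcomp f g)) /\
  (forall g, S g -> exists h, S h /\ gcomp h g = gid G /\ gcomp g h = gid G).

Definition player_transitive (G : game) (S : gbij G G -> Prop) :=
  forall p : {perm player G}, exists g, S g /\ forall i, gpl g i = p i.

(** strategy trivial: g(i) = i implies g(s_i) = s_i (compared in the
    disjoint union of strategy sets, since the types differ only up to the
    propositional equality g(i) = i). *)
Definition strategy_trivial (G : game) (S : gbij G G -> Prop) :=
  forall (g : gbij G G) (i : player G), S g -> gpl g i = i ->
    forall a : strat G i,
      existT (fun j => strat G j : Type) (gpl g i) (gst g i a)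
      = existT (fun j => strat G j : Type) i a.

Definition sym_game (M : finType) (X : finType) (v : M -> (M -> X) -> Rdefinitions.R)
  : game := @Game M (fun _ => X) v.

Definition ld_fully_symmetric (M : finType) (X : finType)
    (v : M -> (M -> X) -> Rdefinitions.R) :=
  forall (i : M) (p : {perm M}) (s : M -> X),
    v i s = v (p i) (fun j => s ((p^-1)%g j)).

Definition matching (G : game) (M : profile G -> Prop) :=
  forall (i : player G) (a : strat G i), exists! s : profile G, M s /\ s i = a.

Definition Mrel (G : game) (M : profile G -> Prop) (i j : player G)
    (a : strat G i) (b : strat G j) :=
  exists s : profile G, M s /\ s i = a /\ s j = b.

Definition is_Mperm (G : game) (M : profile G -> Prop) (p : {perm player G})
    (g : gbij G G) :=
  (forall i, gpl g i = p i) /\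
  forall i (a : strat G i), @Mrel G M i (gpl g i) a (gst g i a).

(* Both (i) and (iii) amount to a labelling of all strategy sets by one common
   set X under which, for every permutation p of the players, the game bijection
   sending each strategy of player i to the equally labelled strategy of player
   p(i) is an automorphism.  The profiles with constant label form a matching; a
   matching labels A_k by A_i0 through M_{k i0}; an isomorphism onto a symmetric
   game labels A_k by the common strategy set; and a labelling psi makes
   u_m(psi(x)) fully symmetric.
   For (ii) => (iii), the matching consists of the profiles invariant under the
   subgroup, i.e. the orbits of the subgroup on the disjoint union of the A_k:
   transitivity makes an orbit meet every A_k and strategy triviality makes it
   meet each A_k only once.  Conversely the M_p form a subgroup, and M_p fixes
   the strategies of every player that p fixes. *)

From mathcomp Require Import all_boot all_fingroup.
From Stdlib Require Rdefinitions.
From Stdlib Require Import Eqdep ClassicalEpsilon FunctionalExtensionality.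

Notation strat_at G j a := (existT (fun k => strat G k : Type) j a).

Lemma gbij_ext (G H : game) (g1 g2 : gbij G H) :
  (forall i, gpl g1 i = gpl g2 i) ->
  (forall i a, strat_at H (gpl g1 i) (gst g1 i a) = strat_at H (gpl g2 i) (gst g2 i a)) ->
  g1 = g2.
Proof.
case: g1 g2 => [p1 s1] [p2 s2] /= Ep Es.
have Ep12 : p1 = p2 by apply: functional_extensionality.
subst p2; congr GBij; apply: functional_extensionality_dep => i.
by apply: functional_extensionality => a; apply: inj_pair2 (Es i a).
Qed.

Lemma bijective_sig {A B : Type} {f : A -> B} :
  bijective f -> {g : B -> A | cancel f g & cancel g f}.
Proof.
move=> bij_f.
have [|g [fK gK]] := constructive_indefinite_description (fun g => cancel f g /\ cancel g f).
  by case: bij_f => g; exists g.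
by exists g.
Qed.

Lemma existT_fiber {I : Type} {T : I -> Type} {x : {i : I & T i}} {k} :
  projT1 x = k -> exists b, x = existT T k b.
Proof. by case: x => j b /= <-; exists b. Qed.

Section Relabel.
Context {G : game} {X : finType}.
Variables (phs : forall k, strat G k -> X) (psi : forall k, X -> strat G k).
Hypotheses (phsK : forall k, cancel (phs k) (psi k)) (psiK : forall k, cancel (psi k) (phs k)).

Definition relabel (p : {perm player G}) : gbij G G :=
  @GBij G G p (fun i a => psi (p i) (phs i a)).

Lemma relabel_gbij p : is_gbij (relabel p).
Proof.
split; first by exists p^-1%g => i /=; rewrite ?permK ?permKV.
by move=> i; exists (fun b => psi i (phs (p i) b)) => b /=; rewrite ?psiK ?phsK.
Qed.

Definition label_matching (s : profile G) := exists x, forall k, phs k (s k) = x.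

Lemma label_matching_matching : matching label_matching.
Proof.
move=> i a; exists (fun k => psi k (phs i a)); split.
  by split; [exists (phs i a) => k; rewrite psiK | rewrite phsK].
move=> s [[x sx] <-]; apply: functional_extensionality_dep => k.
by rewrite sx -(sx k) phsK.
Qed.

Lemma relabel_Mperm p : is_Mperm label_matching p (relabel p).
Proof.
split=> // i a; exists (fun k => psi k (phs i a)).
by split; [exists (phs i a) => k; rewrite psiK | rewrite phsK].
Qed.

Definition relabel_payoff (m : player G) (sg : player G -> X) :=
  payoff G m (fun k => psi k (sg k)).

Lemma relabel_payoff_symmetric :
  (forall p, is_iso (relabel p)) -> ld_fully_symmetric relabel_payoff.
Proof.
move=> iso_relabel i p sg; have [_ payoffE] := iso_relabel p.
by apply: payoffE => k /=; rewrite permK psiK.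
Qed.

Lemma relabel_payoff_isomorphic : isomorphic G (sym_game relabel_payoff).
Proof.
exists (@GBij G (sym_game relabel_payoff) id phs); split.
  by split=> [|i]; [exists id | exists (psi i)].
move=> i s t /= tE; congr (payoff G i).
by apply: functional_extensionality_dep => k; rewrite tE phsK.
Qed.

End Relabel.

Definition relabel_symmetric (G : game) :=
  exists (X : finType) (phs : forall k, strat G k -> X) (psi : forall k, X -> strat G k),
    (forall k, cancel (phs k) (psi k)) /\ (forall k, cancel (psi k) (phs k)) /\
    forall p, is_iso (relabel phs psi p).

Section Matching.
Context {G : game} {M : profile G -> Prop}.
Hypothesis matchingM : matching M.

Definition matching_profile (i : player G) (a : strat G i) : profile G :=
  proj1_sig (constructive_indefinite_description _ (matchingM i a)).

Lemma matching_profile_in i a : M (matching_profile i a).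
Proof. by case: (proj2_sig (constructive_indefinite_description _ (matchingM i a))) => [[]]. Qed.

Lemma matching_profile_at i a : matching_profile i a i = a.
Proof. by case: (proj2_sig (constructive_indefinite_description _ (matchingM i a))) => [[]]. Qed.

Lemma matching_profile_eq s i : M s -> matching_profile i (s i) = s.
Proof.
move=> Ms; rewrite /matching_profile.
case: constructive_indefinite_description => s' /= [_ uniq_s'].
by rewrite (uniq_s' s).
Qed.

Lemma matching_profile_id i a j :
  matching_profile j (matching_profile i a j) = matching_profile i a.
Proof. exact/matching_profile_eq/matching_profile_in. Qed.

Lemma Mrel_profile {i j a b} : @Mrel G M i j a b -> matching_profile i a j = b.
Proof. by case=> s [Ms [<- <-]]; rewrite matching_profile_eq. Qed.

Lemma profile_Mrel i j a : @Mrel G M i j a (matching_profile i a j).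
Proof.
exists (matching_profile i a); rewrite matching_profile_at.
by split=> //; apply: matching_profile_in.
Qed.

Lemma Mperm_uniq {p g1 g2} : is_Mperm M p g1 -> is_Mperm M p g2 -> g1 = g2.
Proof.
case=> [pl1 st1] [pl2 st2]; apply: gbij_ext => [i | i a]; first by rewrite pl1 pl2.
by rewrite -(Mrel_profile (st1 i a)) -(Mrel_profile (st2 i a)) pl1 pl2.
Qed.

Lemma Mperm_id : is_Mperm M 1%g (gid G).
Proof.
split=> [i | i a] /=; first by rewrite perm1.
by rewrite -{2}(matching_profile_at i a); apply: profile_Mrel.
Qed.

Lemma Mperm_comp {p q f g} :
  is_Mperm M p f -> is_Mperm M q g -> is_Mperm M (q * p)%g (gcomp f g).
Proof.
case=> plf stf [plg stg]; split=> [i | i a] /=; first by rewrite permM plg plf.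
rewrite -(Mrel_profile (stf _ (gst g i a))) -(Mrel_profile (stg i a)).
by rewrite matching_profile_id; apply: profile_Mrel.
Qed.

Lemma Mperm_fix {p g i a} :
  is_Mperm M p g -> gpl g i = i -> strat_at G (gpl g i) (gst g i a) = strat_at G i a.
Proof.
case=> _ stg gi; rewrite -(Mrel_profile (stg i a)) gi.
by rewrite matching_profile_at.
Qed.

Variable i0 : player G.

Definition matching_label k (b : strat G k) : strat G i0 := matching_profile k b i0.
Definition matching_unlabel k (x : strat G i0) : strat G k := matching_profile i0 x k.

Lemma matching_labelK k : cancel (matching_label k) (matching_unlabel k).
Proof.
by move=> b; rewrite /matching_unlabel /matching_label matching_profile_id matching_profile_at.
Qed.

Lemma matching_unlabelK k : cancel (matching_unlabel k) (matching_label k).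
Proof.
by move=> x; rewrite /matching_unlabel /matching_label matching_profile_id matching_profile_at.
Qed.

Lemma relabel_matching_Mperm p :
  is_Mperm M p (relabel matching_label matching_unlabel p).
Proof.
by split=> // i a; rewrite /= /matching_unlabel /matching_label matching_profile_id;
  apply: profile_Mrel.
Qed.

End Matching.

Section TransitiveTrivial.
Context {G : game} {S : gbij G G -> Prop}.
Hypotheses (autS : aut_subgroup S) (transS : player_transitive S) (trivS : strategy_trivial S).

Definition gmap (g : gbij G G) (x : {j : player G & (strat G j : Type)}) :=
  strat_at G (gpl g (projT1 x)) (gst g _ (projT2 x)).

Lemma gmap_comp f g x : gmap (gcomp f g) x = gmap f (gmap g x).
Proof. by case: x. Qed.

Lemma gmap_id x : gmap (gid G) x = x.
Proof. by case: x. Qed.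

Lemma transitive_move i k : exists g, S g /\ gpl g i = k.
Proof. by have [g [Sg gE]] := transS (tperm i k); exists g; rewrite gE tpermL. Qed.

Lemma trivial_gmap_eq f f' i a :
  S f -> S f' -> gpl f i = gpl f' i -> gmap f (strat_at G i a) = gmap f' (strat_at G i a).
Proof.
case: autS => _ [_ [compS invS]] Sf Sf' ff'i.
have [h [Sh [hf'K f'hK]]] := invS f' Sf'.
have hf_i : gpl (gcomp h f) i = i.
  by rewrite /= ff'i; apply: (congr1 (fun g => gpl g i) hf'K).
have hf_fix : gmap (gcomp h f) (strat_at G i a) = strat_at G i a.
  exact: trivS (compS _ _ Sh Sf) hf_i a.
by rewrite -[LHS]gmap_id -f'hK gmap_comp -(gmap_comp h f) hf_fix.
Qed.

Definition invariant_profile (s : profile G) :=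
  forall g, S g -> forall k, gmap g (strat_at G k (s k)) = strat_at G (gpl g k) (s (gpl g k)).

Lemma invariant_profile_eq s s' i : invariant_profile s -> invariant_profile s' -> s i = s' i -> s = s'.
Proof.
move=> inv_s inv_s' ss'i; apply: functional_extensionality_dep => k.
have [g [Sg <-]] := transitive_move i k.
by apply: (@inj_pair2 _ (fun k => strat G k : Type)); rewrite -inv_s // -inv_s' // ss'i.
Qed.

Lemma invariant_profile_exists i a : exists s, invariant_profile s /\ s i = a.
Proof.
have orbit k : exists b, exists g, S g /\ gmap g (strat_at G i a) = strat_at G k b.
  have [g [Sg gi]] := transitive_move i k.
  by have [b gE] := existT_fiber (x := gmap g (strat_at G i a)) gi; exists b, g.
pose s : profile G := fun k => proj1_sig (constructive_indefinite_description _ (orbit k)).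
have sE k : exists g, S g /\ gmap g (strat_at G i a) = strat_at G k (s k).
  exact: proj2_sig (constructive_indefinite_description _ (orbit k)).
have gmap_player g k b : gmap g (strat_at G i a) = strat_at G k b -> gpl g i = k.
  by move/(congr1 (@projT1 _ _)).
case: autS => _ [Sid [compS _]].
exists s; split.
  move=> h Sh k; have [g [Sg gE]] := sE k; have [g' [Sg' g'E]] := sE (gpl h k).
  rewrite -gE -gmap_comp -g'E; apply: trivial_gmap_eq => //; first exact: compS.
  by rewrite /= (gmap_player _ _ _ gE) (gmap_player _ _ _ g'E).
have [g [Sg gE]] := sE i.
apply: (@inj_pair2 _ (fun k => strat G k : Type)).
by rewrite -gE (trivial_gmap_eq _ _ _ _ Sg Sid) ?gmap_id // (gmap_player _ _ _ gE).
Qed.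

Lemma invariant_profile_matching : matching invariant_profile.
Proof.
move=> i a; have [s [inv_s si]] := invariant_profile_exists i a.
exists s; split=> // s' [inv_s' s'i].
by apply: (invariant_profile_eq _ _ i) => //; rewrite si s'i.
Qed.

Lemma invariant_profile_Mperm (p : {perm player G}) g :
  S g -> (forall i, gpl g i = p i) -> is_Mperm invariant_profile p g.
Proof.
move=> Sg gE; split=> // i a.
have [s [inv_s si]] := invariant_profile_exists i a.
exists s; split=> //; split=> //.
by apply: (@inj_pair2 _ (fun k => strat G k : Type)); rewrite -si -inv_s.
Qed.

End TransitiveTrivial.

Definition sym_representable (G : game) :=
  exists (M' X : finType) (v : M' -> (M' -> X) -> Rdefinitions.R),
    ld_fully_symmetric v /\ isomorphic G (sym_game v).

Definition transitive_trivial_aut (G : game) :=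
  exists S : gbij G G -> Prop,
    aut_subgroup S /\ player_transitive S /\ strategy_trivial S.

Definition matching_aut (G : game) :=
  exists M : profile G -> Prop,
    matching M /\ forall p : {perm player G}, exists g, is_Mperm M p g /\ is_iso g.

Lemma matching_aut_transitive G : matching_aut G -> transitive_trivial_aut G.
Proof.
case=> M [matchingM Mperm_iso].
have Mperm_is_iso p g : is_Mperm M p g -> is_iso g.
  by move=> Mg; have [h [Mh iso_h]] := Mperm_iso p; rewrite (Mperm_uniq matchingM Mg Mh).
exists (fun g => exists p, is_Mperm M p g).
split; [split; [|split; [|split]] | split].
- by move=> g [p /Mperm_is_iso].
- by exists 1%g; apply: Mperm_id.
- by move=> f g [p Mf] [q Mg]; exists (q * p)%g; apply: Mperm_comp.
- move=> g [p Mg]; have [h [Mh _]] := Mperm_iso p^-1%g.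
  exists h; split; first by exists p^-1%g.
  split; apply: (Mperm_uniq matchingM _ (Mperm_id matchingM)).
    by rewrite -(mulgV p); apply: Mperm_comp.
  by rewrite -(mulVg p); apply: Mperm_comp.
- move=> p; have [g [Mg _]] := Mperm_iso p.
  by exists g; split; [exists p | case: Mg].
- by move=> g i [p Mg] gi a; apply: Mperm_fix Mg gi.
Qed.

Lemma transitive_matching_aut G : transitive_trivial_aut G -> matching_aut G.
Proof.
case=> S [autS [transS trivS]].
exists (invariant_profile (S := S)); split; first exact: invariant_profile_matching.
move=> p; have [g [Sg gE]] := transS p; exists g; split.
  exact: invariant_profile_Mperm.
by case: autS => isoS _; apply: isoS.
Qed.

Lemma sym_iso_payoff {G} {M' X : finType} {v : M' -> (M' -> X) -> Rdefinitions.R}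
    {phi : gbij G (sym_game v)} {pinv} :
  cancel (gpl phi) pinv -> is_iso phi ->
  forall i s, payoff G i s = v (gpl phi i) (fun m => gst phi (pinv m) (s (pinv m))).
Proof. by move=> plK [_ payoffE] i s; apply: payoffE => k /=; rewrite plK. Qed.

Lemma representable_relabel G : sym_representable G -> relabel_symmetric G.
Proof.
case=> M' [X [v [symv [phi iso_phi]]]].
have [[bij_pl bij_st] _] := iso_phi.
have [pinv plK plinvK] := bijective_sig bij_pl.
pose psi k := s2val (bijective_sig (bij_st k)).
have phsK k : cancel (gst phi k) (psi k) := s2valP (bijective_sig (bij_st k)).
have psiK k : cancel (psi k) (gst phi k) := s2valP' (bijective_sig (bij_st k)).
exists X, (gst phi), psi; split=> //; split=> // p.
split=> [|i s t /= tE]; first exact: relabel_gbij.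
pose q0 m := gpl phi (p (pinv m)).
have q0K : cancel q0 (fun m => gpl phi (p^-1%g (pinv m))).
  by move=> m; rewrite /q0 plK permK plinvK.
pose q := perm (can_inj q0K).
rewrite !(sym_iso_payoff plK iso_phi) (symv _ q) permE /q0 plK.
have qE m : gst phi (pinv (q m)) (t (pinv (q m))) = gst phi (pinv m) (s (pinv m)).
  by rewrite permE /q0 plK tE psiK.
by congr v; apply: functional_extensionality => m; rewrite -qE permKV.
Qed.

Lemma relabel_matching_aut G : relabel_symmetric G -> matching_aut G.
Proof.
case=> X [phs [psi [phsK [psiK iso_relabel]]]].
exists (label_matching phs); split; first exact: label_matching_matching.
by move=> p; exists (relabel phs psi p); split; [apply: relabel_Mperm | apply: iso_relabel].
Qed.

Lemma relabel_representable G : relabel_symmetric G -> sym_representable G.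
Proof.
case=> X [phs [psi [phsK [psiK iso_relabel]]]].
exists (player G), X, (relabel_payoff psi); split.
  exact: relabel_payoff_symmetric.
exact: relabel_payoff_isomorphic.
Qed.

Lemma no_player_relabel G : (player G -> False) -> relabel_symmetric G.
Proof.
move=> noG; have vacuous (k : player G) (P : Prop) : P by case: (noG k).
exists (unit : finType), (fun _ _ => tt), (fun k _ => False_rect _ (noG k)).
split=> [k|]; first exact: vacuous.
split=> [k | p]; first exact: vacuous.
split=> [|i]; last exact: vacuous.
by apply: relabel_gbij => k; apply: vacuous.
Qed.

Lemma matching_aut_relabel G : matching_aut G -> relabel_symmetric G.
Proof.
case=> M [matchingM Mperm_iso].
case: (pickP (@predT (player G))) => [i0 _ | noG]; last first.
  by apply: no_player_relabel => i; have := noG i.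
exists (strat G i0), (matching_label matchingM i0), (matching_unlabel matchingM i0).
split; [exact: matching_labelK | split; first exact: matching_unlabelK].
move=> p; have [g [Mg iso_g]] := Mperm_iso p.
by rewrite (Mperm_uniq matchingM (relabel_matching_Mperm matchingM i0 p) Mg).
Qed.

Theorem corollary5p2 (G : game) :
  ((exists (M' X : finType) (v : M' -> (M' -> X) -> Rdefinitions.R),
       ld_fully_symmetric v /\ isomorphic G (sym_game v))
   <->
   (exists S : gbij G G -> Prop,
       aut_subgroup S /\ player_transitive S /\ strategy_trivial S))
  /\
  ((exists S : gbij G G -> Prop,
       aut_subgroup S /\ player_transitive S /\ strategy_trivial S)
   <->
   (exists M : profile G -> Prop,
       matching M /\
       forall p : {perm player G}, exists g : gbij G G, is_Mperm M p g /\ is_iso g)).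
Proof.
split; split.
- by move/representable_relabel/relabel_matching_aut/matching_aut_transitive.
- by move/transitive_matching_aut/matching_aut_relabel/relabel_representable.
- exact: transitive_matching_aut.
- exact: matching_aut_transitive.
Qed.
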